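(* Let $E$ be a finite geometric commutative monoid of idempotents with set of atoms $A$. Then $E$ has a monoid presentation with generators $a\in A$ and relations: $a^2=a$ for $a\in A$; $ab=ba$ for $a,b\in A$; and, for every minimally dependent set $\{a_1,\dots,a_k\}$ of atoms, $\widehat{a}_1a_2\cdots a_k=a_1\widehat{a}_2a_3\cdots a_k=\cdots=a_1\cdots a_{k-1}\widehat{a}_k$, where $\widehat{a}_i$ means that $a_i$ is omitted.
   Context: A finite commutative monoid of idempotents $E$ is a join-semilattice with least element $\mathbf 0$ (the identity) via $x\le y\iff xy=y$, with $xy=x\vee y$. It is graded if all saturated chains from $\mathbf 0$ to any $x$ have the same length $\mathrm{rk}(x)$; atoms are the elements of rank $1$; it is atomic if every element is a join of atoms. $E$ is geometric if it is a graded atomic lattice with $\mathrm{rk}(a\vee b)+\mathrm{rk}(a\wedge b)\le\mathrm{rk}(a)+\mathrm{rk}(b)$ for all $a,b$. A set $S$ of atoms is independent if $\bigvee(S\setminus\{s\})<\bigvee S$ for all $s\in S$, dependent otherwise, and minimally dependent if dependent with every proper subset independent. *)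

From mathcomp Require Import all_boot.
Set Implicit Arguments. Unset Strict Implicit. Unset Printing Implicit Defensive.

Section CMI.
Variables (T : finType) (mul : T -> T -> T) (one : T).

Definition is_cmi : Prop :=
  [/\ forall x y z, mul x (mul y z) = mul (mul x y) z,
      forall x y, mul x y = mul y x,
      forall x, mul x x = x &
      forall x, mul one x = x /\ mul x one = x].

(* x <= y iff xy = y ; join is the product *)
Definition le (x y : T) : bool := mul x y == y.
Definition lt (x y : T) : bool := le x y && (x != y).
Definition cov (x y : T) : bool := lt x y && ~~ [exists z, lt x z && lt z y].

(* s is a saturated chain 0 = one < s_1 < ... < s_n = x of length n = size s *)
Definition sat_chain (x : T) (s : seq T) : bool := path cov one s && (last one s == x).

Definition graded : Prop :=
  forall x s1 s2, sat_chain x s1 -> sat_chain x s2 -> size s1 = size s2.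

Definition has_rank (x : T) (n : nat) : Prop := exists2 s, sat_chain x s & size s = n.

Definition is_atom (a : T) : bool := cov one a.

Definition join_seq (s : seq T) : T := foldr mul one s.
Definition join_set (S : {set T}) : T := join_seq (enum S).

Definition atomic : Prop :=
  forall x, exists2 s : seq T, all is_atom s & x = join_seq s.

Definition is_meet (a b m : T) : Prop :=
  [/\ le m a, le m b & forall z, le z a -> le z b -> le z m].

Definition is_lattice : Prop := forall a b, exists m, is_meet a b m.

Definition geometric : Prop :=
  [/\ graded, atomic, is_lattice &
      forall a b m ra rb rj rm, is_meet a b m ->
        has_rank a ra -> has_rank b rb -> has_rank (mul a b) rj -> has_rank m rm ->
        rj + rm <= ra + rb].

Definition independent (S : {set T}) : Prop :=
  forall s, s \in S -> lt (join_set (S :\ s)) (join_set S).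
Definition dependent (S : {set T}) : Prop := ~ independent S.
Definition min_dependent (S : {set T}) : Prop :=
  dependent S /\ forall S' : {set T}, S' \proper S -> independent S'.

Definition gen := {a : T | is_atom a}.
Definition eval (w : seq gen) : T := join_seq (map val w).

Definition omit (i : nat) (w : seq gen) : seq gen := take i w ++ drop i.+1 w.

Inductive rels : seq gen -> seq gen -> Prop :=
| rel_idem (a : gen) : rels [:: a; a] [:: a]
| rel_comm (a b : gen) : rels [:: a; b] [:: b; a]
| rel_dep (w : seq gen) (i j : nat) :
    uniq w -> min_dependent [set x in map val w] ->
    i < size w -> j < size w -> rels (omit i w) (omit j w).

Inductive cong (R : seq gen -> seq gen -> Prop) : seq gen -> seq gen -> Prop :=
| cong_base u v : R u v -> cong R u v
| cong_refl u : cong R u u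
| cong_sym u v : cong R u v -> cong R v u
| cong_trans u v w : cong R u v -> cong R v w -> cong R u w
| cong_ctx p q u v : cong R u v -> cong R (p ++ u ++ q) (p ++ v ++ q).

(* E is presented by generators A and relations rels: the evaluation morphism
   from the free monoid on A is onto and its kernel is the congruence generated
   by rels *)
Definition presented_by_atoms : Prop :=
  (forall x : T, exists w : seq gen, eval w = x) /\
  (forall u v : seq gen, eval u = eval v <-> cong rels u v).

End CMI.

From Pilot Require Import Defs.
From mathcomp Require Import all_boot.
Set Implicit Arguments. Unset Strict Implicit. Unset Printing Implicit Defensive.

(* Soundness: in a geometric lattice the atoms satisfy the MacLane-Steinitz
   exchange property (from the semimodular rank inequality), hence removing any
   one element of a minimally dependent set of atoms does not change its join,
   which is exactly what the relations say.
   Completeness: modulo idempotence and commutativity a word only matters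
   through its set of letters.  If an atom a lies below the value of a word w
   but is not a letter of w, then a lies on a minimally dependent set M inside
   a and the letters of w; the relation attached to M exchanges the letters of
   M other than a, all already in w, for those other than some m <> a, which
   include a.  So every word is congruent to the word of all the atoms below
   its value, and words with equal values are congruent. *)

Section AtomPresentation.
Variables (T : finType) (mul : T -> T -> T) (one : T).
Hypothesis cmi : is_cmi mul one.

Let mulA x y z : mul x (mul y z) = mul (mul x y) z. Proof. by case: cmi. Qed.
Let mulC x y : mul x y = mul y x. Proof. by case: cmi. Qed.
Let mulxx x : mul x x = x. Proof. by case: cmi. Qed.
Let mul1x x : mul one x = x. Proof. by case: cmi => _ _ _ /(_ x)[]. Qed.
Let mulx1 x : mul x one = x. Proof. by case: cmi => _ _ _ /(_ x)[]. Qed.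

Local Notation le := (le mul).
Local Notation lt := (lt mul).
Local Notation cov := (cov mul).
Local Notation is_atom := (is_atom mul one).
Local Notation join_seq := (join_seq mul one).
Local Notation join_set := (join_set mul one).
Local Notation independent := (independent mul one).
Local Notation min_dependent := (min_dependent mul one).

Lemma le_refl x : le x x. Proof. by rewrite /Defs.le mulxx. Qed.

Lemma le_anti x y : le x y -> le y x -> x = y.
Proof. by move=> /eqP lexy /eqP leyx; rewrite -lexy -{1}leyx mulC. Qed.

Lemma le_trans x y z : le x y -> le y z -> le x z.
Proof. by move=> /eqP lexy /eqP <-; rewrite /Defs.le mulA lexy. Qed.

Lemma le1x x : le one x. Proof. by rewrite /Defs.le mul1x. Qed.

Lemma le_mulx x y z : le (mul x y) z = le x z && le y z.
Proof.
apply/eqP/andP => [lexyz|[/eqP lexz /eqP leyz]]; last by rewrite -mulA leyz lexz.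
split; apply/eqP; rewrite -lexyz mulA.
  by rewrite mulA mulxx.
by rewrite [mul x y]mulC mulA mulxx.
Qed.

Lemma le_mull x y : le x (mul x y). Proof. by rewrite /Defs.le mulA mulxx. Qed.
Lemma le_mulr x y : le y (mul x y). Proof. by rewrite mulC le_mull. Qed.

Lemma ltW x y : lt x y -> le x y. Proof. by case/andP. Qed.

Lemma ltxx x : lt x x = false. Proof. by rewrite /Defs.lt eqxx andbF. Qed.

Lemma lt_trans x y z : lt x y -> lt y z -> lt x z.
Proof.
move=> /andP[lexy nexy] /andP[leyz neyz]; rewrite /Defs.lt (le_trans lexy leyz).
by apply: contraNneq nexy => exz; rewrite exz in lexy *; rewrite (le_anti leyz lexy).
Qed.

Lemma lt_mulr x y : lt x (mul x y) = ~~ le y x.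
Proof. by rewrite /Defs.lt le_mull /Defs.le mulC eq_sym. Qed.

Lemma le_join_seq s z : le (join_seq s) z = all (le^~ z) s.
Proof. by elim: s => [|x s IH] /=; rewrite ?le1x // le_mulx IH. Qed.

Lemma join_seq_cat s1 s2 : join_seq (s1 ++ s2) = mul (join_seq s1) (join_seq s2).
Proof. by elim: s1 => [|x s IH] /=; rewrite ?mul1x // IH mulA. Qed.

Lemma le_join_seq_mem s x : x \in s -> le x (join_seq s).
Proof. by move=> xs; move: (le_refl (join_seq s)); rewrite le_join_seq => /allP; apply. Qed.

Lemma eq_join_seq s1 s2 : s1 =i s2 -> join_seq s1 = join_seq s2.
Proof.
move=> eqs; apply: le_anti; rewrite le_join_seq; apply/allP => x xs;
  apply: le_join_seq_mem; by [rewrite -eqs | rewrite eqs].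
Qed.

Lemma le_join_set (S : {set T}) z : le (join_set S) z = [forall x in S, le x z].
Proof.
rewrite /join_set le_join_seq; apply/allP/forall_inP => leSz x xS; apply: leSz => //.
by rewrite mem_enum.
by rewrite -(mem_enum S).
Qed.

Lemma join_set_subset (A B : {set T}) : A \subset B -> le (join_set A) (join_set B).
Proof.
move=> /subsetP AB; rewrite le_join_set; apply/forall_inP => x /AB xB.
by apply: le_join_seq_mem; rewrite mem_enum.
Qed.

Lemma join_setU1 (S : {set T}) s : join_set (s |: S) = mul s (join_set S).
Proof.
by rewrite /join_set -[RHS]/(join_seq (s :: enum S)); apply: eq_join_seq => x;
  rewrite in_cons !mem_enum !inE.
Qed.

Lemma join_setD1 (S : {set T}) s : s \in S -> join_set S = mul (join_set (S :\ s)) s.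
Proof. by move=> sS; rewrite -{1}(setD1K sS) join_setU1 mulC. Qed.

Lemma join_setD1_eq (S : {set T}) s :
  s \in S -> le s (join_set (S :\ s)) -> join_set (S :\ s) = join_set S.
Proof. by move=> sS /eqP lesS; rewrite (join_setD1 sS) mulC lesS. Qed.

Lemma independentP (S : {set T}) :
  reflect (independent S) [forall s in S, ~~ le s (join_set (S :\ s))].
Proof.
apply: (iffP forall_inP) => indepS s sS; have := indepS s sS;
  by rewrite [join_set S](join_setD1 sS) lt_mulr.
Qed.

Lemma min_dependent_sub (S : {set T}) :
  dependent mul one S -> exists2 M : {set T}, M \subset S & min_dependent M.
Proof.
move=> depS; pose P := [pred M : {set T} | ~~ [forall s in M, ~~ le s (join_set (M :\ s))]].
have [M minM MS] : {M | minset P M & M \subset S} by apply: minset_exists; apply/independentP.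
exists M => //; split=> [/independentP indepM|S' ltS'M].
  by move: (minsetp minM); rewrite /= indepM.
apply/independentP; apply: contraT => depS'.
by move: (proper_neq ltS'M); rewrite (minsetinf minM depS' (proper_sub ltS'M)) eqxx.
Qed.

(* A minimal C in W with a <= join C has only independent subsets, so a
   minimal dependent subset of a |: C must contain a. *)
Lemma min_dependent_through a (W : {set T}) : a \notin W -> le a (join_set W) ->
  exists2 M : {set T}, min_dependent M & (a \in M) && (M \subset a |: W).
Proof.
move=> aW leaW; pose P := [pred C : {set T} | (C \subset W) && le a (join_set C)].
have [C minC _] : {C | minset P C & C \subset W} by apply: minset_exists; rewrite /= subxx.
have /andP[CW leaC] := minsetp minC.
have indepC (B : {set T}) : B \subset C -> independent B.
  move=> BC; apply/independentP/forall_inP => s sB; apply/negP => lesB.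
  have sC : s \in C := subsetP BC s sB.
  have lesC : le s (join_set (C :\ s)) by apply: le_trans lesB (join_set_subset (setSD _ BC)).
  have PCs : P (C :\ s).
    by rewrite /= (subset_trans (subD1set C s) CW) (join_setD1_eq sC lesC).
  by move/setP/(_ s): (minsetinf minC PCs (subD1set C s)); rewrite !inE eqxx sC.
have aC : a \notin C := contra (subsetP CW a) aW.
have [|M MaC minM] := min_dependent_sub (S := a |: C).
  by move/independentP/forall_inP/(_ a (setU11 a C)); rewrite (setU1K aC) leaC.
exists M => //; rewrite (subset_trans MaC (setUS _ CW)) andbT.
apply: contraT => aM; case: minM => depM _; case: depM; apply: indepC.
apply/subsetP => x xM; move/subsetP/(_ x xM): MaC; rewrite !inE.
by case/predU1P => // eqxa; rewrite -eqxa xM in aM.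
Qed.

Lemma min_dependent_other a (M : {set T}) :
  is_atom a -> a \in M -> min_dependent M -> exists2 m, m \in M & m != a.
Proof.
move=> ata aM [depM _]; apply/exists_inP; apply: contraT => /exists_inPn onlya.
case: depM; have -> : M = [set a].
  by apply/setP => x; rewrite inE; apply/idP/eqP => [/onlya/negbNE/eqP|->].
apply/independentP/forall_inP => x /set1P ->.
rewrite setDv /join_set enum_set0 /= /Defs.le mulx1 eq_sym.
by case/andP: ata => /andP[].
Qed.

Let itv x y := [set z | lt x z && le z y].

Lemma itv_properl x z y : lt x z -> lt z y -> itv x z \proper itv x y.
Proof.
move=> ltxz ltzy; apply/properP; split.
  by apply/subsetP => u; rewrite !inE => /andP[-> /le_trans->] //; exact: ltW.
exists y; first by rewrite inE (lt_trans ltxz ltzy) le_refl.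
rewrite inE; apply/negP => /andP[_ leyz].
have eqzy := le_anti (ltW ltzy) leyz.
by rewrite eqzy ltxx in ltzy.
Qed.

Lemma itv_properr x z y : lt x z -> lt z y -> itv z y \proper itv x y.
Proof.
move=> ltxz ltzy; apply/properP; split.
  by apply/subsetP => u; rewrite !inE => /andP[/(lt_trans ltxz)-> ->].
by exists z; rewrite inE ?ltxx // ltxz ltW.
Qed.

Lemma cov_path x y : le x y -> exists2 s, path cov x s & last x s = y.
Proof.
have [n] := ubnP #|itv x y|; elim: n x y => // n IH x y /ltnSE ltn lexy.
have [<-|nexy] := eqVneq x y; first by exists [::].
have ltxy : lt x y by rewrite /Defs.lt lexy nexy.
have [covxy|] := boolP (cov x y); first by exists [:: y]; rewrite /= ?covxy.
rewrite /Defs.cov ltxy negbK => /existsP[z /andP[ltxz ltzy]].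
have [s1 p1 l1] := IH x z (leq_trans (proper_card (itv_properl ltxz ltzy)) ltn) (ltW ltxz).
have [s2 p2 l2] := IH z y (leq_trans (proper_card (itv_properr ltxz ltzy)) ltn) (ltW ltzy).
by exists (s1 ++ s2); rewrite ?cat_path ?last_cat l1 ?p1.
Qed.

Lemma sat_chain_gap x z y s : sat_chain mul one x s -> lt x z -> lt z y ->
  exists2 s', sat_chain mul one y s' & (size s).+2 <= size s'.
Proof.
move=> /andP[ps /eqP ls] ltxz ltzy.
have [s1 p1 l1] := cov_path (ltW ltxz).
have [s2 p2 l2] := cov_path (ltW ltzy).
exists (s ++ s1 ++ s2); first by rewrite /sat_chain !cat_path !last_cat ls l1 ps p1 p2 l2 /=.
have size_gt0 s' u v : lt u v -> last u s' = v -> 0 < size s'.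
  by case: s' => //= ltuv eq_uv; rewrite eq_uv ltxx in ltuv.
by rewrite !size_cat -addn2 leq_add2l (leq_add (size_gt0 _ _ _ ltxz l1) (size_gt0 _ _ _ ltzy l2)).
Qed.

Lemma le_atom t m : is_atom t -> le m t -> m = one \/ m = t.
Proof.
case/andP=> _ /existsPn/(_ m) nmid lemt.
have [<-|ne1m] := eqVneq one m; [by left | right].
apply/eqP; apply: contraNT nmid => nemt.
by rewrite /Defs.lt le1x ne1m lemt nemt.
Qed.

Hypothesis geo : geometric mul one.

(* The meet of x and t is one, so the rank inequality bounds the length of any
   saturated chain to x t by that of a chain to x plus one, while an element
   strictly between x and x t would give a chain two steps longer. *)
Lemma cov_mul_atom x t : is_atom t -> ~~ le t x -> cov x (mul x t).
Proof.
move=> att ntx; case: geo => _ _ meet_ex rank_ineq.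
have [m meet_xt] := meet_ex x t.
have m1 : m = one.
  case: meet_xt => lemx lemt _.
  by case: (le_atom att lemt) => // emt; move: ntx; rewrite -emt lemx.
rewrite {}m1 in meet_xt.
rewrite /Defs.cov lt_mulr ntx /=; apply/existsP => -[z /andP[ltxz ltzy]].
have [s0 chain0] : exists s0, sat_chain mul one x s0.
  by have [s p l] := cov_path (le1x x); exists s; rewrite /sat_chain p l eqxx.
have [s1 chain1 gap] := sat_chain_gap chain0 ltxz ltzy.
have : size s1 + 0 <= size s0 + 1.
  apply: rank_ineq meet_xt _ _ _ _; [by exists s0 | | by exists s1 |].
    by exists [:: t] => //; rewrite /sat_chain /= eqxx !andbT.
  by exists [::] => //; rewrite /sat_chain /= eqxx.
by rewrite addn0 addn1 leqNgt gap.
Qed.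

Lemma exchange x t m :
  is_atom t -> ~~ le t x -> le m (mul x t) -> ~~ le m x -> le t (mul x m).
Proof.
move=> att ntx lemxt nmx.
case/andP: (cov_mul_atom att ntx) => _ /existsPn/(_ (mul x m)).
rewrite lt_mulr nmx /Defs.lt le_mulx le_mull lemxt /= negbK => /eqP ->.
exact: le_mulr.
Qed.

(* Dependence makes some m redundant; for t <> m, the independence of M :\ t and
   M :\ m and the exchange property make t redundant as well. *)
Lemma min_dependent_join_setD1 (M : {set T}) t : {subset M <= is_atom} ->
  min_dependent M -> t \in M -> join_set (M :\ t) = join_set M.
Proof.
move=> atM [depM indep_sub] tM.
have /forall_inPn[m mM /negbNE lemM] : ~~ [forall s in M, ~~ le s (join_set (M :\ s))].
  by apply/independentP.
have [->|ntm] := eqVneq t m; first exact: join_setD1_eq.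
have mMt : m \in M :\ t by rewrite !inE mM eq_sym ntm.
have tMm : t \in M :\ m by rewrite !inE tM ntm.
set Y := M :\ t :\ m.
have eqY : M :\ m :\ t = Y by apply/setP => u; rewrite !inE andbCA.
have /independentP/forall_inP/(_ m mMt) nmY := indep_sub _ (properD1 tM).
have /independentP/forall_inP/(_ t tMm) := indep_sub _ (properD1 mM).
rewrite eqY => ntY.
have lemYt : le m (mul (join_set Y) t) by rewrite -eqY -(join_setD1 tMm).
apply: join_setD1_eq => //; rewrite (join_setD1 mMt).
exact: exchange (atM t tM) ntY lemYt nmY.
Qed.

Local Notation gen := (gen mul one).
Local Notation eval := (@eval _ mul one).
Local Notation congR := (cong (@rels _ mul one)).

Definition letters (w : seq gen) : {set T} := [set x in map val w].

Lemma eval_letters w : eval w = join_set (letters w).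
Proof. by apply: eq_join_seq => x; rewrite mem_enum inE. Qed.

Lemma eval_cat u v : eval (u ++ v) = mul (eval u) (eval v).
Proof. by rewrite /Defs.eval map_cat join_seq_cat. Qed.

Lemma le_eval_mem w a : a \in w -> le (val a) (eval w).
Proof. by move=> aw; apply: le_join_seq_mem; rewrite map_f. Qed.

Lemma letters_rem (w : seq gen) a : uniq w -> letters (rem a w) = letters w :\ val a.
Proof.
move=> uw; apply/setP => x; rewrite !inE; apply/mapP/andP => [[y]|[nxa /mapP[y yw exy]]].
  rewrite mem_rem_uniq // inE => /andP[nya yw] ->.
  by split; [rewrite (inj_eq val_inj) | exact: map_f].
exists y => //; rewrite mem_rem_uniq // inE yw andbT.
by apply: contra_neq nxa => eya; rewrite exy eya.
Qed.

Lemma omit_rem (x0 : gen) (w : seq gen) i : uniq w -> i < size w -> omit i w = rem (nth x0 w i) w.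
Proof. by move=> uw ltiw; rewrite remE index_uniq. Qed.

Lemma eval_rels (u v : seq gen) : rels u v -> eval u = eval v.
Proof.
case=> [a|a b|w i j uw minw ltiw ltjw]; rewrite /Defs.eval /= ?mulx1 ?mulxx ?[mul (val a) _]mulC //.
have atw : {subset letters w <= is_atom} by move=> x; rewrite inE => /mapP[y _ ->]; exact: valP.
case: w => // x0 w0 in uw minw ltiw ltjw atw *.
rewrite -!/(eval _) (omit_rem x0 uw ltiw) (omit_rem x0 uw ltjw) !eval_letters !letters_rem //.
by rewrite !(min_dependent_join_setD1 atw minw) // inE map_f ?mem_nth.
Qed.

Lemma cong_eval u v : congR u v -> eval u = eval v.
Proof.
elim=> {u v} [u v /eval_rels //|//|u v _ -> //|u v w _ -> _ -> //|p q u v _ euv].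
by rewrite !eval_cat euv.
Qed.

Lemma cong_cons (a : gen) u v : congR u v -> congR (a :: u) (a :: v).
Proof. by move=> /(cong_ctx [:: a] [::]); rewrite !cats0. Qed.

Lemma cong_catr (q : seq gen) u v : congR u v -> congR (u ++ q) (v ++ q).
Proof. exact: cong_ctx [::] q u v. Qed.

Lemma cong_swap (a b : gen) s : congR [:: a, b & s] [:: b, a & s].
Proof. exact: (cong_catr s (cong_base (rel_comm a b))). Qed.

Lemma cong_dup (a : gen) s : congR [:: a, a & s] (a :: s).
Proof. exact: (cong_catr s (cong_base (rel_idem a))). Qed.

Lemma cong_insert (a : gen) (P : pred gen) s : uniq s -> a \in s ->
  congR (a :: filter P s) (filter (predU1 a P) s).
Proof.
elim: s => [|b s IH] //= /andP[bs us]; rewrite in_cons.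
have [eab _|nab /= as_] := eqVneq a b.
  subst b; rewrite /= (@eq_in_filter _ (predU1 a P) P) => [|x xs]; last first.
    by rewrite /= (negbTE (memPn bs x xs)).
  by case: (P a); [exact: cong_dup | exact: cong_refl].
case: (P b); last exact: IH.
exact: cong_trans (cong_swap _ _ _) (cong_cons _ (IH us as_)).
Qed.

Lemma cong_enum (w : seq gen) : congR w (filter (mem w) (enum [set: gen])).
Proof.
elim: w => [|a w IH].
  by rewrite (eq_filter (a2 := pred0)) // filter_pred0; exact: cong_refl.
apply: cong_trans (cong_cons a IH) _.
rewrite (eq_filter (a1 := mem (a :: w)) (a2 := predU1 a (mem w))) => [|x]; last first.
  exact: in_cons.
by apply: cong_insert; rewrite ?enum_uniq ?mem_enum ?inE.
Qed.

Lemma cong_mem (u v : seq gen) : u =i v -> congR u v.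
Proof.
move=> euv; apply: cong_trans (cong_enum u) _; apply: cong_sym.
by rewrite (eq_filter (a1 := mem u) (a2 := mem v)) => [|x]; [exact: cong_enum | exact: euv].
Qed.

Definition atom_word (M : {set T}) : seq gen := [seq x <- enum [set: gen] | val x \in M].

Lemma atom_word_uniq M : uniq (atom_word M).
Proof. by rewrite filter_uniq ?enum_uniq. Qed.

Lemma mem_atom_word M x : (x \in atom_word M) = (val x \in M).
Proof. by rewrite mem_filter mem_enum in_setT andbT. Qed.

Lemma letters_atom_word (M : {set T}) : {subset M <= is_atom} -> letters (atom_word M) = M.
Proof.
move=> atM; apply/setP => x; rewrite inE; apply/mapP/idP => [[y] | xM].
  by rewrite mem_atom_word => yM ->.
by exists (Sub x (atM x xM)); rewrite ?mem_atom_word SubK.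
Qed.

Lemma cong_absorb (w : seq gen) (a : gen) : le (val a) (eval w) -> congR w (a :: w).
Proof.
move=> leaw; have [aw|naw] := boolP (a \in w).
  by apply: cong_mem => x; rewrite in_cons; case: eqP => // ->.
have aW : val a \notin letters w by rewrite inE (mem_map val_inj).
rewrite eval_letters in leaw.
have [M minM /andP[aM MaW]] := min_dependent_through aW leaw.
have Mw x : val x \in M -> x != a -> x \in w.
  move=> /(subsetP MaW); rewrite !inE (mem_map val_inj) => /predU1P[/val_inj-> | //].
  by rewrite eqxx.
have atM : {subset M <= is_atom}.
  move=> x /(subsetP MaW); rewrite !inE => /predU1P[-> | /mapP[y _ ->]]; exact: valP.
have [m mM nma] := min_dependent_other (valP a) aM minM.
pose m' : gen := Sub m (atM m mM).
have am' : a != m' by apply: contra_neq nma => ->; rewrite SubK.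
have R : rels (rem a (atom_word M)) (rem m' (atom_word M)).
  rewrite !remE; apply: rel_dep; first exact: atom_word_uniq.
  - by move: minM; rewrite -{1}(letters_atom_word atM).
  - by rewrite index_mem mem_atom_word.
  - by rewrite index_mem mem_atom_word SubK.
have drop_a : congR w (rem a (atom_word M) ++ w).
  apply: cong_mem => x; rewrite mem_cat mem_rem_uniq ?atom_word_uniq // inE.
  case: (boolP (x \in w)) => [|xw]; rewrite ?orbT // orbF; apply/esym.
  by apply: contraNF xw => /andP[xa]; rewrite mem_atom_word => /Mw; apply.
have add_a : congR (rem m' (atom_word M) ++ w) (a :: w).
  apply: cong_mem => x; rewrite mem_cat in_cons mem_rem_uniq ?atom_word_uniq // inE.
  have [->|xa] := eqVneq x a; first by rewrite am' mem_atom_word aM.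
  case: (boolP (x \in w)) => [|xw]; rewrite ?orbT // orbF.
  by apply: contraNF xw => /andP[_]; rewrite mem_atom_word => /Mw; apply.
exact: cong_trans drop_a (cong_trans (cong_catr _ (cong_base R)) add_a).
Qed.

Lemma cong_absorb_seq (u v : seq gen) :
  {in v, forall a, le (val a) (eval u)} -> congR u (v ++ u).
Proof.
elim: v => [|a v IH] lev /=; first exact: cong_refl.
have lev' : {in v, forall b, le (val b) (eval u)}.
  by move=> b bv; apply: lev; rewrite in_cons bv orbT.
have levu : le (eval v) (eval u).
  by rewrite le_join_seq; apply/allP => _ /mapP[b bv ->]; exact: lev'.
apply: cong_trans (IH lev') (cong_absorb _).
by rewrite eval_cat (eqP levu); apply: lev; exact: mem_head.
Qed.

Lemma eval_inj_cong (u v : seq gen) : eval u = eval v -> congR u v.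
Proof.
move=> euv.
have leu : {in u, forall a, le (val a) (eval v)} by move=> a au; rewrite -euv le_eval_mem.
have lev : {in v, forall a, le (val a) (eval u)} by move=> a av; rewrite euv le_eval_mem.
apply: cong_trans (cong_absorb_seq lev) (cong_trans _ (cong_sym (cong_absorb_seq leu))).
by apply: cong_mem => x; rewrite !mem_cat orbC.
Qed.

Lemma atomic_eval_surj : atomic mul one -> forall x, exists w : seq gen, eval w = x.
Proof.
move=> atomicT x; have [s ats ->] := atomicT x; exists (pmap insub s).
rewrite /Defs.eval (pmap_filter (insubK _)); congr join_seq.
by rewrite -[RHS]filter_predT; apply/eq_in_filter => y /(allP ats) aty; rewrite /= insubT.
Qed.
End AtomPresentation.

Theorem theorem1 (T : finType) (mul : T -> T -> T) (one : T) :
  is_cmi mul one -> geometric mul one -> presented_by_atoms mul one.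
Proof.
move=> cmi geo; split=> [|u v]; first by case: geo => _ atomicT _ _; exact: atomic_eval_surj.
by split; [exact: eval_inj_cong | exact: cong_eval].
Qed.
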